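(* Let $n>2$ be an integer and let $A$ be a set of $k$ integers with $k\ge 2n+1$. Then $$|S_n(A)|> (k-1)n-3\binom n2+1.$$
   Context: For a finite set $A\subseteq\mathbb Z$ and a positive integer $n$, define $$S_n(A)=\{a_1+\cdots+a_n:\ a_1,\ldots,a_n\in A,\ \text{and}\ a_i^2\neq a_j^2\ \text{for}\ 1\le i<j\le n\}.$$ *)

From mathcomp Require Import all_boot all_order all_algebra.
Set Implicit Arguments. Unset Strict Implicit. Unset Printing Implicit Defensive.
Import Order.TTheory GRing.Theory Num.Theory.
Local Open Scope ring_scope.

Fixpoint tuples_from (s : seq int) (n : nat) : seq (seq int) :=
  match n with
  | O => [:: [::]]
  | m.+1 => [seq x :: t | x <- s, t <- tuples_from s m]
  end.

(* S_n(A) = { a_1+...+a_n : a_i in A, a_i^2 pairwise distinct },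
   as a duplicate-free list of integers *)
Definition Sn (n : nat) (A : seq int) : seq int :=
  undup [seq (\sum_(a <- t) a) | t <- tuples_from A n
                                 & uniq [seq a ^+ 2 | a <- t]].

From mathcomp Require Import all_boot all_order all_algebra.
From mathcomp Require Import zify.
Set Implicit Arguments. Unset Strict Implicit. Unset Printing Implicit Defensive.
Import Order.TTheory GRing.Theory Num.Theory.
Local Open Scope ring_scope.

(* Induction on n from n = 3.  Let v be an element of A of largest absolute value;
   replacing A by -A we may assume v > 0.
   - If -v is not in A, let m be the least sum of S_n(A \ v).
     Exchanging one summand of M at a time gives |B| - n + 1 sums of S_n(B) in
     (M - 2v, M]; shifted by v they lie above all the sums of S_n(B) shifted by -v,
     so |S_(n+1)(A)| >= |S_n(B)| + |B| - n + 1.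
   In both cases the bound for n gives the bound for n + 1.  For n = 3 one shows
   |S_3(A)| >= 3|A| - 10 as soon as A has four distinct squares: removing v loses
   at least three sums while four squares remain, and the configurations where it
   does not apply (v alone in its class, exactly four classes) are settled by
   explicit lists of sums. *)

Lemma ex_max_seq d (T : orderType d) (s : seq T) :
  s != [::] -> exists2 M, M \in s & {in s, forall x, (x <= M)%O}.
Proof.
elim: s => [//|a s IH] _; have [->|/IH[M Ms HM]] := eqVneq s [::].
  by exists a => [|x]; rewrite ?mem_seq1 // => /eqP->.
have [aM|Ma] := leP a M.
  by exists M => [|x]; rewrite inE ?Ms ?orbT // => /predU1P[->|/HM].
exists a => [|x]; rewrite ?mem_head // inE => /predU1P[->//|/HM xM].
exact: le_trans xM (ltW Ma).
Qed.

Lemma ex_min_seq d (T : orderType d) (s : seq T) :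
  s != [::] -> exists2 m, m \in s & {in s, forall x, (m <= x)%O}.
Proof. exact: (@ex_max_seq _ T^d). Qed.

Lemma uniq_cat_lt d (T : porderType d) (s1 s2 : seq T) : uniq s1 -> uniq s2 ->
  {in s1 & s2, forall x y, (x < y)%O} -> uniq (s1 ++ s2).
Proof.
move=> u1 u2 lt12; rewrite cat_uniq u1 u2 andbT; apply/hasPn => y ys2.
by apply/negP => ys1; have := lt12 y y ys1 ys2; rewrite ltxx.
Qed.

Lemma leq_size_cat_lt d (T : porderType d) (s1 s2 s : seq T) : uniq s1 -> uniq s2 ->
  {in s1 & s2, forall x y, (x < y)%O} -> {subset s1 <= s} -> {subset s2 <= s} ->
  (size s1 + size s2 <= size s)%N.
Proof.
move=> u1 u2 lt12 s1s s2s; rewrite -size_cat uniq_leq_size ?uniq_cat_lt // => x.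
by rewrite mem_cat => /orP[/s1s|/s2s].
Qed.

(* The chain is M - t + f (t in T), then M - t0 + y (y in G, y <> f), then M. *)
Lemma sumset_chain (P : pred int) (M t0 f : int) (T G : seq int) :
  uniq T -> uniq G -> t0 \in T -> f \in G ->
  {in T, forall t, t0 <= t} -> {in G, forall y, f <= y} -> {in G & T, forall y t, y < t} ->
  P M -> {in T, forall t, P (M - t + f)} -> {in G, forall y, P (M - t0 + y)} ->
  exists W, [/\ uniq W, {subset W <= P}, size W = (size T + size G)%N &
                {in W, forall w, exists2 t, t \in T & M - t + f <= w}].
Proof.
move=> uT uG t0T fG t0_min f_min GT PM Pf Pt0.
have f_lt := GT f t0 fG t0T.
have remG y : y \in rem f G -> f < y /\ y \in G.
  by rewrite mem_rem_uniq // inE => /andP[yf yG]; rewrite lt_neqAle eq_sym yf f_min.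
exists ([seq M - t + f | t <- T] ++ [seq M - t0 + y | y <- rem f G] ++ [:: M]); split.
- apply: uniq_cat_lt; [|apply: uniq_cat_lt|].
  + by rewrite map_inj_uniq // => x y /addIr /subrI.
  + by rewrite (map_inj_uniq (addrI _)) rem_uniq.
  + done.
  + move=> x y /mapP[z /remG[z_gt zG] ->]; rewrite inE => /eqP ->.
    by have := GT z t0 zG t0T; lia.
  + move=> x y /mapP[t tT ->]; have t0_le := t0_min t tT; rewrite mem_cat inE.
    case/orP=> [/mapP[z /remG[z_gt _] ->]|/eqP ->]; lia.
- move=> w; rewrite !mem_cat inE => /or3P[/mapP[t tT ->]|/mapP[y /remG[_ yG] ->]|/eqP ->].
  + exact: Pf.
  + exact: Pt0.
  + exact: PM.
- by rewrite !size_cat !size_map size_rem //= addn1 prednK //; case: (G) fG.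
- move=> w; rewrite !mem_cat inE => /or3P[/mapP[t tT ->]|/mapP[y /remG[y_gt _] ->]|/eqP ->].
  + by exists t.
  + by exists t0 => //; lia.
  + by exists t0 => //; lia.
Qed.

Lemma sqr_lt_itv (a v : int) : 0 < v -> a ^+ 2 < v ^+ 2 -> - v < a < v.
Proof. by move=> v_gt0 av; apply/andP; split; nia. Qed.

Lemma sqr_le_itv (a v : int) : 0 <= v -> a ^+ 2 <= v ^+ 2 -> - v <= a <= v.
Proof. by move=> v_ge0 av; apply/andP; split; nia. Qed.

Lemma size_sqr_fiber (A : seq int) (r : int) :
  uniq A -> {in A, forall a, a ^+ 2 = r} -> (size A <= 2)%N.
Proof.
case: A => [//|a A] uA Ar; apply: (uniq_leq_size (s2 := [:: a; - a])) => // b bA.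
by have /eqP := Ar b bA; rewrite -(Ar a (mem_head _ _)) eqf_sqr !inE.
Qed.

Local Notation sqrs s := [seq x ^+ 2 | x <- s].

Lemma size_sqr_preimage (A R : seq int) :
  uniq A -> {subset sqrs A <= R} -> (size A <= 2 * size R)%N.
Proof.
elim: R A => [|r R IH] A uA AR.
  by case: A uA AR => // a A _ /(_ (a ^+ 2)); rewrite inE eqxx => /(_ isT).
rewrite -(count_predC (fun a => a ^+ 2 == r)) -!size_filter mulnS.
apply: leq_add.
  apply: (@size_sqr_fiber _ r (filter_uniq _ uA)) => a.
  by rewrite mem_filter => /andP[/eqP].
apply: IH (filter_uniq _ uA) _ => x /mapP[a]; rewrite mem_filter => /andP[ar aA] ->.
by have := AR _ (map_f _ aA); rewrite inE (negbTE ar).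
Qed.

Lemma size_filter_new_sqr (B T : seq int) : uniq B ->
  (size B <= size [seq b <- B | b ^+ 2 \notin sqrs T] + 2 * size T)%N.
Proof.
move=> uB; rewrite -(count_predC (fun b => b ^+ 2 \in sqrs T) B) addnC -!size_filter.
rewrite leq_add2l -(size_map (fun x => x ^+ 2) T) size_sqr_preimage ?filter_uniq //.
by move=> r /mapP[b]; rewrite mem_filter => /andP[bT _] ->.
Qed.

Lemma size_filter_new_sqr_lt (B T : seq int) (t : int) : uniq B -> uniq T -> t \in T ->
  ~~ ((- t \in B) && (t != 0)) ->
  (size B < size [seq b <- B | b ^+ 2 \notin sqrs T] + 2 * size T)%N.
Proof.
move=> uB uT tT t_lone.
rewrite -(count_predC (fun b => b ^+ 2 \in sqrs T) B) addnC -!size_filter ltn_add2l.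
apply: (@leq_trans (size (T ++ [seq - x | x <- rem t T])).+1); last first.
  by rewrite size_cat size_map size_rem // -addnS prednK ?mul2n ?addnn //; case: (T) tT.
rewrite ltnS; apply: uniq_leq_size (filter_uniq _ uB) _ => b.
rewrite mem_filter mem_cat => /andP[/mapP[s sT /eqP]]; rewrite eqf_sqr.
case/orP => /eqP-> sB; first by rewrite sT.
have [st|st] := eqVneq s t; last by rewrite map_f ?orbT // mem_rem_uniq // inE st.
by move: t_lone; rewrite -st sB negbK => /eqP s0; rewrite s0 oppr0 -s0 sT.
Qed.

Lemma uniq_sqrs_rem (t : seq int) (a : int) : uniq (sqrs t) -> uniq (sqrs (rem a t)).
Proof. exact/subseq_uniq/map_subseq/rem_subseq. Qed.

Lemma sqr_notin_rem (t : seq int) (a : int) :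
  uniq (sqrs t) -> a \in t -> a ^+ 2 \notin sqrs (rem a t).
Proof.
by move=> ut at_; move: ut; rewrite (perm_uniq (perm_map _ (perm_to_rem at_))) => /andP[].
Qed.

Lemma sqrs_rem_notin (t : seq int) (a y : int) :
  y ^+ 2 \notin sqrs t -> y ^+ 2 \notin sqrs (rem a t).
Proof. by apply: contra => /mapP[z /mem_rem zt ->]; apply: map_f. Qed.

Definition nsqr (A : seq int) : nat := size (undup (sqrs A)).

Lemma size_le_nsqr (A : seq int) : uniq A -> (size A <= 2 * nsqr A)%N.
Proof. by move=> uA; apply: size_sqr_preimage => // r; rewrite mem_undup. Qed.

Lemma nsqr_le_size (A : seq int) : (nsqr A <= size A)%N.
Proof. by rewrite /nsqr (leq_trans (size_undup _)) ?size_map. Qed.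

Lemma nsqr_opp (A : seq int) : nsqr [seq - a | a <- A] = nsqr A.
Proof.
by rewrite /nsqr -map_comp (eq_map (g := fun a => a ^+ 2)) // => a /=; rewrite sqrrN.
Qed.

Lemma nsqr_rem_le (A : seq int) (v : int) : uniq A -> (nsqr A <= (nsqr (rem v A)).+1)%N.
Proof.
move=> uA; apply: (uniq_leq_size (s2 := v ^+ 2 :: undup (sqrs (rem v A)))).
  exact: undup_uniq.
move=> r; rewrite mem_undup inE mem_undup => /mapP[a aA ->].
have [->|av] := eqVneq a v; first by rewrite eqxx.
by rewrite (map_f (fun x => x ^+ 2)) ?orbT // mem_rem_uniq // inE av.
Qed.

Lemma nsqr_rem_opp (A : seq int) (v : int) : uniq A -> - v \in A -> v != 0 ->
  (nsqr A <= nsqr (rem v A))%N.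
Proof.
move=> uA vA v_neq0; apply: uniq_leq_size; first exact: undup_uniq.
move=> r; rewrite !mem_undup => /mapP[a aA ->].
have [->|av] := eqVneq a v; last first.
  by rewrite (map_f (fun x => x ^+ 2)) // mem_rem_uniq // inE av.
rewrite -sqrrN (map_f (fun x => x ^+ 2)) // mem_rem_uniq // inE vA andbT.
by apply: contra v_neq0 => /eqP v_eq; apply/eqP; lia.
Qed.

Lemma nsqr_rem_new (A : seq int) (v : int) : uniq A -> v \in A ->
  v ^+ 2 \notin sqrs (rem v A) -> nsqr A = (nsqr (rem v A)).+1.
Proof.
move=> uA vA vn; apply/eqP; rewrite eqn_leq nsqr_rem_le //=.
apply: (uniq_leq_size (s1 := v ^+ 2 :: undup (sqrs (rem v A)))).
  by rewrite /= mem_undup vn undup_uniq.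
by move=> r; rewrite inE !mem_undup => /predU1P[->|/mapP[a /mem_rem aA ->]]; apply: map_f.
Qed.

Lemma ex_sqr_uniq_seq (A : seq int) :
  exists t, [/\ size t = nsqr A, {subset t <= A} & uniq (sqrs t)].
Proof.
elim: A => [|a A [t [st tA ut]]]; first by exists [::].
have tA' : {subset t <= a :: A} by move=> x /tA; rewrite inE orbC => ->.
rewrite /nsqr /=; case: ifP => aA; first by exists t.
exists (a :: t); rewrite /= st ut andbT; split=> //.
  by move=> x; rewrite !inE => /predU1P[->|/tA ->]; rewrite ?eqxx ?orbT.
by apply: contraFN aA => /mapP[x /tA xA ->]; exact: map_f.
Qed.

Lemma ex_sqr_uniq_tuple n (A : seq int) : (n <= nsqr A)%N ->
  exists t, [/\ size t = n, {subset t <= A} & uniq (sqrs t)].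
Proof.
move=> n_le; have [t [st tA ut]] := ex_sqr_uniq_seq A.
exists (take n t); rewrite size_takel ?st // map_take take_uniq //; split=> //.
by move=> x /mem_take /tA.
Qed.

Lemma ex_new_sqr (A T : seq int) : (size T < nsqr A)%N ->
  exists2 y, y \in A & y ^+ 2 \notin sqrs T.
Proof.
move=> T_lt; apply/hasP; apply: contraTT T_lt => /hasPn old; rewrite -leqNgt.
rewrite -(size_map (fun x => x ^+ 2) T); apply: uniq_leq_size (undup_uniq _) _ => r.
by rewrite mem_undup => /mapP[y /old]; rewrite negbK => yT ->.
Qed.

Lemma sqrs_cover (A L : seq int) : size L = nsqr A -> {subset L <= A} -> uniq (sqrs L) ->
  {in A, forall b, b ^+ 2 \in sqrs L}.
Proof.
move=> sL LA uL b bA.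
have LA2 : {subset sqrs L <= undup (sqrs A)}.
  by move=> _ /mapP[x /LA xA ->]; rewrite mem_undup; apply: map_f.
have sz : (size (undup (sqrs A)) <= size (sqrs L))%N by rewrite size_map sL.
have eqL := (uniq_min_size uL LA2 sz).2.
by rewrite eqL mem_undup; apply: map_f.
Qed.

Lemma subset_pairs (A L : seq int) : {in A, forall b, b ^+ 2 \in sqrs L} ->
  {subset A <= L ++ [seq - x | x <- L & (- x \in A) && (x != 0)]}.
Proof.
move=> cover b bA; rewrite mem_cat; have /mapP[x xL /eqP] := cover b bA.
rewrite eqf_sqr => /orP[/eqP->|/eqP b_eq]; first by rewrite xL.
have [x0|x_neq0] := eqVneq x 0; first by rewrite b_eq x0 oppr0 -x0 xL.
by rewrite b_eq (map_f -%R) ?orbT // mem_filter -b_eq bA x_neq0.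
Qed.

Lemma mem_tuples_from (A : seq int) n (t : seq int) :
  (t \in tuples_from A n) = (size t == n) && all (mem A) t.
Proof.
elim: n t => [|n IH] t /=; first by case: t.
apply/allpairsPdep/idP => [[x [u [xA uA ->]]]|].
  by move: uA; rewrite /= IH xA eqSS.
case: t => [//|x u] /= /andP[su /andP[xA uA]]; exists x, u.
by rewrite IH -eqSS su uA.
Qed.

Lemma SnP n (A : seq int) (x : int) :
  reflect (exists t, [/\ size t = n, {subset t <= A}, uniq (sqrs t) & x = \sum_(a <- t) a])
          (x \in Sn n A).
Proof.
rewrite /Sn mem_undup; apply: (iffP mapP) => [[t]|[t [st tA ut ->]]].
  by rewrite mem_filter mem_tuples_from => /andP[ut /andP[/eqP st /allP tA]] ->; exists t.
by exists t; rewrite // mem_filter mem_tuples_from ut st eqxx; apply/allP.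
Qed.

Lemma mem_Sn n (A t : seq int) : size t = n -> {subset t <= A} -> uniq (sqrs t) ->
  \sum_(a <- t) a \in Sn n A.
Proof. by move=> st tA ut; apply/SnP; exists t. Qed.

Lemma Sn_uniq n (A : seq int) : uniq (Sn n A).
Proof. exact: undup_uniq. Qed.

Lemma Sn_subset n (A B : seq int) : {subset A <= B} -> {subset Sn n A <= Sn n B}.
Proof.
move=> AB _ /SnP[t [st tA ut ->]]; apply: mem_Sn => //.
by move=> x /tA /AB.
Qed.

Lemma Sn_neq0 n (A : seq int) : (n <= nsqr A)%N -> Sn n A != [::].
Proof.
case/ex_sqr_uniq_tuple => t [st tA ut]; apply/eqP => Sn0.
by have := mem_Sn st tA ut; rewrite Sn0.
Qed.

Lemma Sn_opp n (A : seq int) (x : int) :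
  (x \in Sn n [seq - a | a <- A]) = (- x \in Sn n A).
Proof.
have sqrs_opp t : sqrs [seq - a | a <- t] = sqrs t.
  by rewrite -map_comp; apply: eq_map => a /=; rewrite sqrrN.
apply/SnP/SnP => -[t [st tA ut xt]]; exists [seq - a | a <- t];
  rewrite size_map sqrs_opp big_map sumrN -xt ?opprK; split=> //.
  by move=> _ /mapP[b /tA /mapP[a aA ->] ->]; rewrite opprK.
by move=> _ /mapP[b /tA bA ->]; apply: map_f.
Qed.

Lemma size_Sn_opp n (A : seq int) : size (Sn n [seq - a | a <- A]) = size (Sn n A).
Proof.
rewrite -(size_map -%R (Sn n A)); apply/perm_size/uniq_perm.
- exact: Sn_uniq.
- by rewrite (map_inj_uniq oppr_inj) Sn_uniq.
- by move=> x; rewrite Sn_opp -{2}(opprK x) (mem_map oppr_inj).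
Qed.

Lemma Sn_cons n (A t : seq int) (a : int) : size t = n -> {subset t <= A} ->
  uniq (sqrs t) -> a \in A -> a ^+ 2 \notin sqrs t -> a + \sum_(x <- t) x \in Sn n.+1 A.
Proof.
move=> st tA ut aA at_.
have -> : a + \sum_(x <- t) x = \sum_(x <- a :: t) x by rewrite big_cons.
apply: mem_Sn; rewrite /= ?st ?at_ //.
by move=> x; rewrite inE => /predU1P[->|/tA].
Qed.

Lemma Sn_addr n (A B : seq int) (a x : int) : {subset B <= A} -> a \in A ->
  {in B, forall b, b ^+ 2 != a ^+ 2} -> x \in Sn n B -> x + a \in Sn n.+1 A.
Proof.
move=> BA aA aB /SnP[t [st tB ut ->]]; rewrite addrC Sn_cons //.
  by move=> b /tB /BA.
by apply/mapP => -[b /tB /aB /eqP ba /esym].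
Qed.

Lemma Sn_swap n (A t : seq int) (a y : int) : size t = n -> {subset t <= A} ->
  uniq (sqrs t) -> a \in t -> y \in A -> y ^+ 2 \notin sqrs (rem a t) ->
  \sum_(x <- t) x - a + y \in Sn n A.
Proof.
move=> st tA ut at_ yA yt; have t_rem := perm_to_rem at_.
rewrite -st (perm_size t_rem) (perm_big _ t_rem) big_cons /= [a + _]addrC addrK addrC.
rewrite Sn_cons ?uniq_sqrs_rem //.
by move=> x /mem_rem /tA.
Qed.

Lemma wlog_pos_top (P : seq int -> Prop) :
  (forall A : seq int, P [seq - a | a <- A] -> P A) ->
  (forall (A : seq int) (v : int), uniq A -> v \in A -> 0 < v ->
     {in A, forall a, a ^+ 2 <= v ^+ 2} -> P A) ->
  forall A : seq int, uniq A -> (1 < size A)%N -> P A.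
Proof.
move=> P_opp P_top A uA A_gt1.
have A_neq0 : sqrs A != [::] by case: (A) A_gt1.
have [_ /mapP[a aA ->] a_max] := ex_max_seq A_neq0.
have a_top : {in A, forall b, b ^+ 2 <= a ^+ 2} by move=> b bA; apply/a_max/map_f.
case: (ltgtP a 0) => [a_lt0|a_gt0|a0]; last first.
- have : {subset A <= [:: 0]}.
    by move=> b /a_top; rewrite a0 expr0n /= inE -sqrf_eq0 eq_le sqr_ge0 andbT.
  by move/(uniq_leq_size uA); rewrite leqNgt A_gt1.
- exact: P_top uA aA a_gt0 a_top.
apply: P_opp; apply: (P_top _ (- a)); rewrite ?oppr_gt0 ?(mem_map oppr_inj) //.
  by rewrite (map_inj_uniq oppr_inj).
by move=> _ /mapP[b bA ->]; rewrite !sqrrN a_top.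
Qed.

(** * Adding an element of maximal absolute value *)

Lemma swap_ler (M t y : int) : (M - t + y <= M) = (y <= t).
Proof. by rewrite -addrA gerDl addrC subr_le0. Qed.

Lemma size_Sn_rem_top n (A : seq int) (v : int) : uniq A -> v \in A -> 0 < v ->
  {in A, forall a, a ^+ 2 <= v ^+ 2} -> (n < nsqr (rem v A))%N ->
  (size (Sn n (rem v A)) + n <= size (Sn n A))%N.
Proof.
move=> uA vA v_gt0 v_top n_lt; set A' := rem v A in n_lt *.
have vA' : v \notin A' by rewrite mem_rem_uniqF.
have A'A : {subset A' <= A} by move=> x /mem_rem.
have A'_itv a : a \in A' -> - v <= a < v.
  move=> aA'; have /andP[-> a_le] := sqr_le_itv (ltW v_gt0) (v_top a (A'A a aA')).
  by rewrite lt_neqAle a_le andbT; apply: contraNneq vA' => <-.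
have [M MS M_max] := ex_max_seq (Sn_neq0 (ltnW n_lt)).
have /SnP[T [sT TA' uT eM]] := MS.
have TA : {subset T <= A} by move=> x /TA' /A'A.
have vT : - v \notin T.
  apply/negP => vT; rewrite -sT in n_lt; have [y yA' yT] := ex_new_sqr n_lt.
  have := M_max _ (Sn_swap sT TA' uT vT yA' (sqrs_rem_notin _ yT)).
  rewrite -eM swap_ler => y_le; have /andP[y_ge _] := A'_itv y yA'.
  have y_eq : y = - v by apply/eqP; rewrite eq_le y_le y_ge.
  by move: yT; rewrite y_eq (map_f (fun x => x ^+ 2) vT).
have := @leq_size_cat_lt _ _ (Sn n A') [seq M - t + v | t <- T] (Sn n A).
rewrite size_map sT; apply.
- exact: Sn_uniq.
- by rewrite map_inj_uniq ?(map_uniq uT) // => x y /addIr /subrI.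
- move=> x _ /M_max x_le /mapP[t /TA' /A'_itv t_itv ->]; lia.
- exact: Sn_subset.
- move=> _ /mapP[t tT ->]; rewrite eM Sn_swap //.
  apply/mapP => -[z /mem_rem zT /eqP]; rewrite eq_sym eqf_sqr.
  case/orP => /eqP z_eq; first by move: vA'; rewrite -z_eq TA'.
  by move: vT; rewrite -z_eq zT.
Qed.

Lemma size_SnS_unpaired_top n (A : seq int) (v : int) : uniq A -> v \in A -> 0 < v ->
  {in A, forall a, a != v -> a ^+ 2 < v ^+ 2} -> Sn n (rem v A) != [::] ->
  (size (Sn n (rem v A)) + (size (rem v A) - 2 * n) <= size (Sn n.+1 A))%N.
Proof.
move=> uA vA v_gt0 v_top SnA'; set A' := rem v A in SnA' *.
have vA' : v \notin A' by rewrite mem_rem_uniqF.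
have A'A : {subset A' <= A} by move=> x /mem_rem.
have A'_lt a : a \in A' -> a ^+ 2 < v ^+ 2.
  by move=> aA'; apply: v_top (A'A a aA') _; apply: contraNneq vA' => <-.
have [m mS m_min] := ex_min_seq SnA'.
have /SnP[T [sT TA' uT em]] := mS.
set U := [seq a <- A' | a ^+ 2 \notin sqrs T].
have := size_filter_new_sqr T (rem_uniq v uA); rewrite -/U sT => U_ge.
apply: (@leq_trans (size U + size (Sn n A'))).
  by rewrite addnC leq_add2r leq_subLR addnC.
have := @leq_size_cat_lt _ _ [seq a + m | a <- U] [seq y + v | y <- Sn n A'] (Sn n.+1 A).
rewrite !size_map; apply.
- by rewrite (map_inj_uniq (addIr m)) filter_uniq ?rem_uniq.
- by rewrite (map_inj_uniq (addIr v)) Sn_uniq.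
- move=> x z /mapP[a aU ->] /mapP[y /m_min m_le ->].
  by move: aU; rewrite mem_filter => /andP[_ /A'_lt /(sqr_lt_itv v_gt0)]; lia.
- move=> x /mapP[a aU ->]; move: aU; rewrite mem_filter => /andP[aT /A'A aA].
  by rewrite em Sn_cons // => w /TA' /A'A.
- move=> x /mapP[y yS ->]; apply: Sn_addr A'A vA _ yS.
  by move=> b /A'_lt; rewrite lt_neqAle => /andP[].
Qed.

Lemma swap_far (M v t y : int) : - v < t < v -> - v < y < v -> M - 2 * v < M - t + y.
Proof. lia. Qed.

Section ChainBelowMax.

Variables (n : nat) (B T : seq int) (v M : int).
Hypotheses (n_gt0 : (0 < n)%N) (uB : uniq B) (B_itv : {in B, forall b, - v < b < v})
  (B_ge : (2 * n + 1 <= size B)%N) (sT : size T = n) (TB : {subset T <= B})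
  (uT : uniq (sqrs T)) (eM : M = \sum_(x <- T) x) (M_max : {in Sn n B, forall x, x <= M}).

Let F := [seq b <- B | b ^+ 2 \notin sqrs T].

Let uT' : uniq T. Proof. exact: map_uniq uT. Qed.
Let uF : uniq F. Proof. exact: filter_uniq. Qed.

Let MS : M \in Sn n B. Proof. by rewrite eM mem_Sn. Qed.

Let FB y : y \in F -> y \in B /\ y ^+ 2 \notin sqrs T.
Proof. by rewrite mem_filter => /andP[]. Qed.

Let swap t y : t \in T -> y \in B -> y ^+ 2 \notin sqrs (rem t T) -> M - t + y \in Sn n B.
Proof. by move=> tT yB yT; rewrite eM Sn_swap. Qed.

Let swapF t y : t \in T -> y \in F -> M - t + y \in Sn n B.
Proof. by move=> tT /FB[yB yT]; rewrite swap // sqrs_rem_notin. Qed.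

Let F_lt_T : {in F & T, forall y t, y < t}.
Proof.
move=> y t yF tT; have [_ yT] := FB yF.
rewrite lt_neqAle -(swap_ler M) M_max ?swapF // andbT.
by apply: contraNneq yT => ->; apply: map_f.
Qed.

Let F_ge : (size B <= size F + 2 * n)%N.
Proof. by rewrite -sT size_filter_new_sqr. Qed.

Let F_gt t : t \in T -> ~~ ((- t \in B) && (t != 0)) -> (size B < size F + 2 * n)%N.
Proof. by move=> tT t_lone; rewrite -sT (size_filter_new_sqr_lt uB uT' tT). Qed.

Let T_neq0 : T != [::].
Proof. by rewrite -size_eq0 sT -lt0n. Qed.

Let F_neq0 : F != [::].
Proof. by apply: contraTneq F_ge => ->; rewrite /= -ltnNge; lia. Qed.

Let far (W : seq int) f : f \in F ->
    {in W, forall w, exists2 t, t \in T & M - t + f <= w} -> {in W, forall w, M - 2 * v < w}.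
Proof.
move=> /FB[/B_itv f_itv _] W_ge w /W_ge[t /TB /B_itv t_itv].
exact/lt_le_trans/swap_far.
Qed.

Let long_chain := exists W, [/\ uniq W, {subset W <= Sn n B},
  {in W, forall w, M - 2 * v < w} & (size B < n + size W)%N].

Let extremal f t0 :=
  [/\ f \in F, {in F, forall y, f <= y}, t0 \in T & {in T, forall t, t0 <= t}].

Let chainF f t0 : extremal f t0 ->
  exists W, [/\ uniq W, {subset W <= Sn n B}, size W = (size T + size F)%N &
                {in W, forall w, exists2 t, t \in T & M - t + f <= w}].
Proof.
case=> fF f_min t0T t0_min.
exact: sumset_chain uT' uF t0T fF t0_min f_min F_lt_T MS (fun t tT => swapF tT fF)
  (fun y => swapF t0T).
Qed.

Let chain_lone f t0 t : extremal f t0 -> t \in T -> ~~ ((- t \in B) && (t != 0)) ->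
  long_chain.
Proof.
move=> ext tT t_lone; have [fF _ _ _] := ext; have [W [uW WS sW W_ge]] := chainF ext.
exists W; split=> //; first exact: far fF W_ge.
by rewrite sW sT addnA addnn -mul2n addnC (F_gt tT).
Qed.

Let swap_opp t : t \in T -> - t \in B -> M - t + - t \in Sn n B.
Proof. by move=> tT tB; rewrite swap // sqrrN sqr_notin_rem. Qed.

Let paired_gt0 t : t \in T -> - t \in B -> t != 0 -> 0 < t.
Proof.
move=> tT tB t_neq0; have := M_max (swap_opp tT tB).
rewrite -addrA -opprD gerBl -mulr2n pmulrn_lge0 //.
by rewrite le_eqVlt eq_sym (negbTE t_neq0).
Qed.

(* If every summand t of M has its opposite in B, F may be one element short; the
   missing sum is M - 2 t0 (inside the chain) or M - 2 tm (below it), where t0 and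
   tm are the least and the largest summands. *)
Let chain_paired_low f t0 : extremal f t0 -> - t0 \in B -> t0 != 0 -> f < - t0 ->
  long_chain.
Proof.
case=> fF f_min t0T t0_min t0B t0_neq0 f_lt.
have t0_gt0 := paired_gt0 t0T t0B t0_neq0.
set G := - t0 :: F.
have uG : uniq G.
  by rewrite /= uF andbT; apply/negP => /FB[_]; rewrite sqrrN (map_f (fun x => x ^+ 2)).
have fG : f \in G by rewrite inE fF orbT.
have f_minG : {in G, forall y, f <= y}.
  by move=> y; rewrite inE => /predU1P[->|/f_min //]; exact: ltW.
have G_lt_T : {in G & T, forall y t, y < t}.
  move=> y t; rewrite inE => /predU1P[-> tT|]; last exact: F_lt_T.
  exact: lt_le_trans (gtrN t0_gt0) (t0_min t tT).
have swapG : {in G, forall y, M - t0 + y \in Sn n B}.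
  by move=> y; rewrite inE => /predU1P[->|/(swapF t0T) //]; exact: swap_opp.
have [W [uW WS sW W_ge]] := sumset_chain uT' uG t0T fG t0_min f_minG G_lt_T MS
  (fun t tT => swapF tT fF) swapG.
exists W; split=> //; first exact: far fF W_ge.
by rewrite sW /= sT !addnS ltnS addnA addnn -mul2n addnC F_ge.
Qed.

Let chain_paired_high f t0 : extremal f t0 -> {in T, forall t, - t \in B} -> - t0 <= f ->
  long_chain.
Proof.
move=> ext paired f_ge; have [fF _ t0T t0_min] := ext.
have f_gt : - t0 < f.
  rewrite lt_neqAle f_ge andbT; have [_] := FB fF; apply: contraNneq => <-.
  by rewrite sqrrN (map_f (fun x => x ^+ 2)).
have [tm tmT tm_max] := ex_max_seq T_neq0.
have [W [uW WS sW W_ge]] := chainF ext.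
have tm_lt w : w \in W -> M - tm + - tm < w.
  case/W_ge => t tT; apply: lt_le_trans; apply: ler_ltD (lerB (lexx M) (tm_max t tT)) _.
  by apply: le_lt_trans f_gt; rewrite lerN2 t0_min.
exists (M - tm + - tm :: W); split.
- by rewrite /= uW andbT; apply/negP => /tm_lt; rewrite ltxx.
- by move=> w; rewrite inE => /predU1P[->|/WS]; [exact: swap_opp (paired tm tmT)|].
- move=> w; rewrite inE => /predU1P[->|]; last exact: far fF W_ge w.
  by have /B_itv tm_itv := TB tmT; apply: swap_far; rewrite // ltrN2 ltrNl andbC.
- by rewrite /= sW sT !addnS ltnS addnA addnn -mul2n addnC F_ge.
Qed.

Lemma Sn_chain_below_max :
  exists W, [/\ uniq W, {subset W <= Sn n B}, {in W, forall w, M - 2 * v < w} &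
                (size B - n + 1 <= size W)%N].
Proof.
suff [W [uW WS W_far W_gt]] : long_chain.
  exists W; rewrite addn1 ltn_subLR // (leq_trans _ B_ge) //.
  by rewrite mul2n -addnn -addnA leq_addr.
have [f fF f_min] := ex_min_seq F_neq0; have [t0 t0T t0_min] := ex_min_seq T_neq0.
have ext : extremal f t0 by [].
case: (boolP (all (fun t => (- t \in B) && (t != 0)) T)) => [paired|]; last first.
  by case/allPn => t tT; apply: chain_lone ext tT.
have /andP[t0B t0_neq0] := allP paired t0 t0T.
have [f_lt|f_ge] := ltrP f (- t0); first exact: chain_paired_low ext t0B t0_neq0 f_lt.
by apply: chain_paired_high ext _ f_ge => t /(allP paired) /andP[].
Qed.

End ChainBelowMax.

Lemma size_SnS_paired_top n (A B : seq int) (v : int) : (0 < n)%N -> uniq B ->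
  {subset B <= A} -> v \in A -> - v \in A -> {in B, forall b, - v < b < v} ->
  (2 * n + 1 <= size B)%N ->
  (size (Sn n B) + (size B - n + 1) <= size (Sn n.+1 A))%N.
Proof.
move=> n_gt0 uB BA vA vA' B_itv B_ge.
have B_v b : b \in B -> b ^+ 2 != v ^+ 2.
  by case/B_itv/andP => v_lt lt_v; rewrite eqf_sqr (lt_eqF lt_v) (gt_eqF v_lt).
have n_le : (n <= nsqr B)%N by have := size_le_nsqr uB; lia.
have [M MS M_max] := ex_max_seq (Sn_neq0 n_le).
have /SnP[T [sT TB uT eM]] := MS.
have [W [uW WS W_far W_ge]] := Sn_chain_below_max n_gt0 uB B_itv B_ge sT TB uT eM M_max.
apply: leq_trans (leq_add (leqnn _) W_ge) _.
have := @leq_size_cat_lt _ _ [seq x - v | x <- Sn n B] [seq w + v | w <- W] (Sn n.+1 A).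
rewrite !size_map; apply.
- by rewrite (map_inj_uniq (addIr _)) Sn_uniq.
- by rewrite (map_inj_uniq (addIr _)).
- by move=> _ _ /mapP[x /M_max x_le ->] /mapP[w /W_far w_gt ->]; lia.
- by move=> _ /mapP[x xS ->]; apply: Sn_addr BA vA' _ xS => b /B_v; rewrite sqrrN.
- by move=> _ /mapP[w /WS wS ->]; apply: Sn_addr BA vA B_v wS.
Qed.

(** * The case [n = 3] *)

Lemma Sn3_sum (A : seq int) (x y z : int) : x \in A -> y \in A -> z \in A ->
  x ^+ 2 != y ^+ 2 -> x ^+ 2 != z ^+ 2 -> y ^+ 2 != z ^+ 2 -> x + y + z \in Sn 3 A.
Proof.
move=> xA yA zA xy xz yz.
have -> : x + y + z = \sum_(a <- [:: x; y; z]) a by rewrite !big_cons big_nil addr0 addrA.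
apply: mem_Sn => //; first by move=> a; rewrite !inE => /or3P[]/eqP->.
by rewrite /= !inE !negb_or xy xz yz.
Qed.

(* Explicit sums of three elements of A with distinct squares; the case splits
   below separate the possible coincidences among them. *)
Ltac sums_uniq := rewrite /= !inE ?negb_or; repeat (apply/andP; split); apply/eqP; lia.

Ltac sums_in_Sn3 EA := move=> w; rewrite !inE;
  repeat case/orP; move/eqP->; apply: Sn3_sum;
  solve [ apply: EA; rewrite !inE eqxx ?orbT //
        | rewrite eqf_sqr negb_or; apply/andP; split; apply/eqP; lia ].

Ltac sums_count L EA := apply: (@uniq_leq_size _ L); [sums_uniq | sums_in_Sn3 EA].

Lemma size_Sn3_0pair (A : seq int) (a b c v : int) :
  - v < a < v -> - v < b < v -> - v < c < v -> uniq (sqrs [:: a; b; c]) ->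
  {subset [:: v; a; b; c] <= A} -> (2 <= size (Sn 3 A))%N.
Proof.
move=> /andP[? ?] /andP[? ?] /andP[? ?].
rewrite /= !inE !negb_or !eqf_sqr !negb_or andbT => /and3P[/and3P[/andP[? ?] ? ?] ? ?] EA.
by sums_count [:: a + b + c; a + b + v] EA.
Qed.

Lemma size_Sn3_1pair (A : seq int) (p a b v : int) : 0 < p < v -> - v < a < v -> - v < b < v ->
  uniq (sqrs [:: p; a; b]) -> {subset [:: v; - p; p; a; b] <= A} -> (5 <= size (Sn 3 A))%N.
Proof.
move=> /andP[? ?] /andP[? ?] /andP[? ?].
rewrite /= !inE !negb_or !eqf_sqr !negb_or andbT => /and3P[/and3P[/andP[? ?] ? ?] ? ?] EA.
sums_count [:: a + b + p; a + b - p; v + p + a; v + p + b; v + a + b] EA.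
Qed.

Lemma size_Sn3_2pairs (A : seq int) (p q e v : int) : 0 < p < q -> q < v -> - v < e < v ->
  uniq (sqrs [:: p; q; e]) -> {subset [:: v; - p; - q; p; q; e] <= A} ->
  (8 <= size (Sn 3 A))%N.
Proof.
move=> /andP[? ?] ? /andP[? ?].
rewrite /= !inE !negb_or !eqf_sqr !negb_or andbT => /and3P[/and3P[_ ? ?] ? ?] EA.
have [k1|k1] := eqVneq (e + 2 * p - q) 0.
  sums_count [:: e + p - q; e - p - q; v + p + q; v + p - q; v - p + q;
    v - p - q; v + e + q; v + e - q] EA.
have [k2|k2] := eqVneq (e + 2 * p - v) 0; last first.
  sums_count [:: e + p + q; e + p - q; e - p + q; e - p - q; v + p + q;
    v - p + q; v + e + p; v + e + q] EA.
have [k3|k3] := eqVneq (2 * p - 2 * q - e + v) 0; last first.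
  sums_count [:: e + p + q; e + p - q; e - p + q; e - p - q; v + p + q;
    v + p - q; v + e + p; v + e + q] EA.
have [k4|k4] := eqVneq (2 * p + q - e) 0.
  sums_count [:: e + p + q; e + p - q; e - p + q; e - p - q; v + p + q;
    v + e + p; v + e + q; v + e - q] EA.
sums_count [:: e + p + q; e + p - q; e - p + q; e - p - q; v + p + q;
  v + e + p; v + e - p; v + e + q] EA.
Qed.

Lemma size_Sn3_3pairs (A : seq int) (x y z v : int) : 0 < x < y -> y < z < v ->
  {subset [:: v; - x; - y; - z; x; y; z] <= A} -> (11 <= size (Sn 3 A))%N.
Proof.
move=> /andP[? ?] /andP[? ?] EA.
have [k|k] := eqVneq (x + y - z) 0.
  sums_count [:: x + y - z; x - y + z; x - y - z; - x + y + z; - x + y - z;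
    - x - y - z; v + y + z; v + x + z; v - x + z; v + x + y; v - x + y] EA.
sums_count [:: x + y + z; x + y - z; x - y + z; x - y - z; - x + y + z;
  - x + y - z; - x - y + z; - x - y - z; v + y + z; v + x + z; v + x + y] EA.
Qed.

Lemma size_Sn3_top (A P Q : seq int) (v : int) : size (P ++ Q) = 3 ->
  sorted <%R P -> {in P, forall p, 0 < p} -> {in P ++ Q, forall x, - v < x < v} ->
  uniq (sqrs (P ++ Q)) -> {subset v :: [seq - p | p <- P] ++ P ++ Q <= A} ->
  (3 * size P + 2 <= size (Sn 3 A))%N.
Proof.
case: P => [|p [|q [|r [|? ?]]]]; case: Q => [|a [|b [|c [|? ?]]]] //= _ P_sorted P_pos PQ_itv.
- by apply: (@size_Sn3_0pair A a b c v); apply: PQ_itv; rewrite !inE eqxx ?orbT.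
- have /andP[_ p_lt] := PQ_itv p (mem_head _ _).
  by apply: (@size_Sn3_1pair A p a b v); rewrite ?P_pos ?p_lt ?PQ_itv ?inE ?eqxx ?orbT.
- have /andP[_ q_lt] : - v < q < v by apply: PQ_itv; rewrite !inE eqxx orbT.
  move: P_sorted => /andP[pq _]; apply: (@size_Sn3_2pairs A p q a v);
  by rewrite ?P_pos ?pq ?q_lt ?PQ_itv ?inE ?eqxx ?orbT.
- have /andP[_ r_lt] : - v < r < v by apply: PQ_itv; rewrite !inE eqxx !orbT.
  move: P_sorted => /and3P[pq qr _] _; apply: (@size_Sn3_3pairs A p q r v);
  by rewrite ?P_pos ?pq ?qr ?r_lt ?inE ?eqxx.
Qed.

Lemma norm_mem_pair (A : seq int) (x : int) : x \in A -> - x \in A ->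
  `|x| \in A /\ - `|x| \in A.
Proof. by case: (lerP 0 x) => [/ger0_norm->|/ltr0_norm->]; rewrite ?opprK. Qed.

Lemma size_Sn3_reps (A L : seq int) (v : int) : v \in A -> size L = 3 ->
  {subset L <= A} -> uniq (sqrs L) -> {in L, forall x, - v < x < v} ->
  (3 * count (fun x => (- x \in A) && (x != 0)) L + 2 <= size (Sn 3 A))%N.
Proof.
move=> vA sL LA uL L_itv; set paired := fun x => _.
set F := [seq x <- L | paired x].
set P := sort <=%O [seq `|x| | x <- F].
set Q := [seq x <- L | ~~ paired x].
have sqrs_norm : sqrs [seq `|y| | y <- F] = sqrs F.
  by rewrite -map_comp; apply: eq_map => x /=; rewrite real_normK ?num_real.
have sqrs_P : perm_eq (sqrs P) (sqrs F).
  by rewrite -sqrs_norm; exact/perm_map/permEl/perm_sort.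
have F_pair y : y \in F -> y \in A /\ - y \in A.
  by rewrite mem_filter => /andP[/andP[yA' _] /LA yA].
have P_mem x : x \in P -> exists2 y, y \in F & x = `|y|.
  by rewrite mem_sort => /mapP.
have -> : count paired L = size P by rewrite /P size_sort size_map size_filter.
apply: (@size_Sn3_top A P Q v).
- by rewrite size_cat /P size_sort size_map !size_filter count_predC sL.
- rewrite sort_lt_sorted; apply: (@map_uniq _ _ (fun x => x ^+ 2)).
  by rewrite sqrs_norm; apply: subseq_uniq uL; exact/map_subseq/filter_subseq.
- move=> x /P_mem[y]; rewrite mem_filter => /andP[/andP[_ y_neq0] _] ->.
  by rewrite normr_gt0.
- move=> x; rewrite mem_cat => /orP[/P_mem[y]|]; last by rewrite mem_filter => /andP[_ /L_itv].
  rewrite mem_filter => /andP[_ /L_itv y_itv] ->; rewrite ltr_norml y_itv andbT.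
  by case/andP: y_itv => v_lt _; apply: lt_le_trans v_lt (ler_norm y).
- rewrite map_cat (perm_uniq (perm_cat sqrs_P (perm_refl _))) -map_cat.
  by rewrite (perm_uniq (perm_map _ (permEl (perm_filterC paired L)))).
- move=> x; rewrite inE !mem_cat => /or3P[/eqP->//| |].
    by case/mapP => _ /P_mem[y /F_pair[yA yA'] ->] ->; case: (norm_mem_pair yA yA').
  case/orP => [/P_mem[y /F_pair[yA yA'] ->]|]; first by case: (norm_mem_pair yA yA').
  by rewrite mem_filter => /andP[_ /LA].
Qed.

Lemma size_Sn3_unpaired_top (A : seq int) (v : int) : uniq A -> v \in A -> 0 < v ->
  - v \notin A -> {in A, forall a, a ^+ 2 <= v ^+ 2} -> nsqr A = 4 ->
  (3 * size A <= size (Sn 3 A) + 10)%N.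
Proof.
move=> uA vA v_gt0 vA' v_top nsqrA; set A' := rem v A.
have A'A : {subset A' <= A} by move=> x /mem_rem.
have A'_itv a : a \in A' -> - v < a < v.
  move=> aA'; have aA := A'A a aA'.
  have /andP[v_le le_v] := sqr_le_itv (ltW v_gt0) (v_top a aA).
  rewrite !lt_neqAle v_le le_v !andbT; apply/andP; split.
    by apply: contraNneq vA' => ->.
  by apply: contraTneq aA' => ->; rewrite mem_rem_uniqF.
have v_new : v ^+ 2 \notin sqrs A'.
  apply/mapP => -[a /A'_itv /andP[v_lt lt_v] /eqP]; rewrite eq_sym eqf_sqr.
  by rewrite (lt_eqF lt_v) (gt_eqF v_lt).
have nsqrA' : nsqr A' = 3.
  by apply/eqP; rewrite -eqSS -(nsqr_rem_new uA vA v_new) nsqrA.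
have [L [sL LA' uL]] := ex_sqr_uniq_seq A'.
have LA : {subset L <= A} by move=> x /LA' /A'A.
have A'_le : (size A' <= 3 + count (fun x => (- x \in A) && (x != 0)) L)%N.
  have := uniq_leq_size (rem_uniq v uA) (subset_pairs (sqrs_cover sL LA' uL)).
  rewrite size_cat size_map sL nsqrA' size_filter => /leq_trans; apply.
  by rewrite leq_add2l; apply: sub_count => x /andP[/A'A -> ->].
rewrite nsqrA' in sL; have := size_Sn3_reps vA sL LA uL (fun x xL => A'_itv x (LA' x xL)).
have sA : size A = (size A').+1.
  by rewrite size_rem // prednK // -has_predT; apply/hasP; exists v.
by rewrite sA; lia.
Qed.

Lemma size_Sn3_lower (A : seq int) : uniq A -> (4 <= nsqr A)%N ->
  (3 * size A <= size (Sn 3 A) + 10)%N.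
Proof.
have [k] := ubnP (size A); elim: k A => // k IH A sA uA nsqrA.
have A_gt1 : (1 < size A)%N by rewrite (leq_trans _ (nsqr_le_size A)) // (leq_trans _ nsqrA).
move: sA nsqrA; pattern A; apply: wlog_pos_top uA A_gt1 => {}A.
  move=> IH_opp sA nsqrA; rewrite -size_Sn_opp -(size_map -%R).
  by apply: IH_opp; rewrite ?size_map ?nsqr_opp.
move=> v uA vA v_gt0 v_top /ltnSE sA nsqrA.
case: (boolP ((- v \in A) || (4 < nsqr A)%N)) => [shrink|]; last first.
  rewrite negb_or -leqNgt => /andP[vA' nsqr_le]; apply: (@size_Sn3_unpaired_top A v) => //.
  by apply/eqP; rewrite eqn_leq nsqr_le nsqrA.
have nsqrA' : (4 <= nsqr (rem v A))%N.
  case/orP: shrink => [vA'|nsqr_gt]; first by rewrite (leq_trans nsqrA) ?nsqr_rem_opp ?gt_eqF.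
  by rewrite -ltnS (leq_trans nsqr_gt) ?nsqr_rem_le.
have sA' : size A = (size (rem v A)).+1.
  by rewrite size_rem // prednK // -has_predT; apply/hasP; exists v.
have := IH (rem v A) _ (rem_uniq v uA) nsqrA'; rewrite -ltnS -sA' => /(_ sA).
have := size_Sn_rem_top uA vA v_gt0 v_top nsqrA'; rewrite sA' /=.
lia.
Qed.

(** * Induction on [n] *)

Section InductionStep.

Variable n : nat.
Hypothesis n_gt0 : (0 < n)%N.
Hypothesis IH : forall B : seq int, uniq B -> (2 * n + 1 <= size B)%N ->
  ((size B).-1 * n + 2 <= size (Sn n B) + 3 * 'C(n, 2))%N.

Let step_paired (A : seq int) (v : int) : uniq A -> v \in A -> - v \in A -> 0 < v ->
  {in A, forall a, a ^+ 2 <= v ^+ 2} -> (2 * n.+1 + 1 <= size A)%N ->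
  ((size A).-1 * n.+1 + 2 <= size (Sn n.+1 A) + 3 * ('C(n, 2) + n))%N.
Proof.
move=> uA vA vA' v_gt0 v_top A_ge; set B : seq int := rem (- v) (rem v A).
have uB : uniq B by rewrite !rem_uniq.
have B_mem b : b \in B -> [/\ b \in A, b != v & b != - v].
  by rewrite mem_rem_uniq ?rem_uniq // inE mem_rem_uniq // inE => /and3P[-> -> ->].
have B_itv : {in B, forall b, - v < b < v}.
  move=> b /B_mem[bA b_v b_v']; have /andP[] := sqr_le_itv (ltW v_gt0) (v_top b bA).
  by rewrite !le_eqVlt (negbTE b_v) eq_sym (negbTE b_v') => /= -> ->.
have sA : size A = (size B).+2.
  have vA1 : - v \in rem v A by rewrite mem_rem_uniq // inE lt_eqF ?gtrN.
  by rewrite (perm_size (perm_to_rem vA)) /= (perm_size (perm_to_rem vA1)).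
have B_ge : (2 * n + 1 <= size B)%N by move: A_ge; rewrite sA; lia.
have BA : {subset B <= A} by move=> b /B_mem[].
have := size_SnS_paired_top n_gt0 uB BA vA vA' B_itv B_ge.
by have := IH uB B_ge; rewrite sA; nia.
Qed.

Let step_unpaired (A : seq int) (v : int) : uniq A -> v \in A -> - v \notin A -> 0 < v ->
  {in A, forall a, a ^+ 2 <= v ^+ 2} -> (2 * n.+1 + 1 <= size A)%N ->
  ((size A).-1 * n.+1 + 2 <= size (Sn n.+1 A) + 3 * ('C(n, 2) + n))%N.
Proof.
move=> uA vA vA' v_gt0 v_top A_ge; set A' : seq int := rem v A.
have sA : size A = (size A').+1 by rewrite (perm_size (perm_to_rem vA)).
have A'_ge : (2 * n + 1 <= size A')%N by move: A_ge; rewrite sA; lia.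
have v_top' : {in A, forall a, a != v -> a ^+ 2 < v ^+ 2}.
  move=> a aA a_v; rewrite lt_neqAle v_top // andbT eqf_sqr negb_or a_v.
  by apply: contraNneq vA' => <-.
have SnA' : Sn n A' != [::].
  by apply: Sn_neq0; have := size_le_nsqr (rem_uniq v uA); rewrite -/A'; lia.
have := size_SnS_unpaired_top uA vA v_gt0 v_top' SnA'.
by have := IH (rem_uniq v uA) A'_ge; rewrite sA /= -/A'; nia.
Qed.

Lemma size_SnS_lower (A : seq int) : uniq A -> (2 * n.+1 + 1 <= size A)%N ->
  ((size A).-1 * n.+1 + 2 <= size (Sn n.+1 A) + 3 * 'C(n.+1, 2))%N.
Proof.
move=> uA A_ge; have A_gt1 : (1 < size A)%N by lia.
move: A_ge; pattern A; apply: wlog_pos_top uA A_gt1 => {}A.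
  move=> IH_opp A_ge; rewrite -size_Sn_opp -(size_map -%R A).
  by apply: IH_opp; rewrite size_map.
move=> v uA vA v_gt0 v_top A_ge; rewrite binS bin1.
have [vA'|vA'] := boolP (- v \in A).
  exact: step_paired uA vA vA' v_gt0 v_top A_ge.
exact: step_unpaired uA vA vA' v_gt0 v_top A_ge.
Qed.

End InductionStep.

Lemma size_Sn_lower n (A : seq int) : (2 < n)%N -> uniq A -> (2 * n + 1 <= size A)%N ->
  ((size A).-1 * n + 2 <= size (Sn n A) + 3 * 'C(n, 2))%N.
Proof.
elim: n A => [//|n IH] A; rewrite ltnS leq_eqVlt => /predU1P[<-|n_gt2] uA A_ge.
  have nsqrA : (4 <= nsqr A)%N by have := size_le_nsqr uA; lia.
  by have := size_Sn3_lower uA nsqrA; have -> : 'C(3, 2) = 3 by []; lia.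
apply: size_SnS_lower uA A_ge; first exact: ltn_trans n_gt2.
by move=> B uB B_ge; apply: IH.
Qed.

Theorem theorem1p5 (n k : nat) (A : seq int) :
  (2 < n)%N -> uniq A -> size A = k -> (2 * n + 1 <= k)%N ->
  ((k%:Z - 1) * n%:Z - 3 * ('C(n, 2))%:Z + 1 < (size (Sn n A))%:Z).
Proof. by move=> n_gt2 uA <- A_ge; have := size_Sn_lower n_gt2 uA A_ge; lia. Qed.
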